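(* Let $f:\mathbb{R}^{d\times r}\to\mathbb{R}$ be a $\rho$-weakly convex function ($\rho\ge 0$), and suppose that $f$ is $L$-Lipschitz continuous on some bounded open convex set $\mathcal U\subseteq\mathbb{R}^{d\times r}$ containing $\mathcal M=\mathrm{St}(d,r)$. Then for every $\lambda\in\big(0,(\rho+3L)^{-1}\big)$, the proximal mapping $P_{\lambda f}$ is single-valued on $\mathcal M$, and for all $x,y\in\mathcal M$, $$\|P_{\lambda f}(x)-P_{\lambda f}(y)\|_F\le \frac{1}{1-\lambda(\rho+3L)}\,\|x-y\|_F .$$
   Context: $\mathcal M=\mathrm{St}(d,r)=\{x\in\mathbb{R}^{d\times r}: x^\top x=I_r\}$ with $d\ge r$, equipped with the Frobenius norm $\|\cdot\|_F$. A function $f$ is $\rho$-weakly convex if $f+\frac{\rho}{2}\|\cdot\|_F^2$ is convex. For $\lambda>0$ and $x\in\mathcal M$, the manifold Moreau envelope and proximal mapping are $f_\lambda(x)=\min_{y\in\mathcal M}\{f(y)+\frac{1}{2\lambda}\|y-x\|_F^2\}$ and $P_{\lambda f}(x)\in\arg\min_{y\in\mathcal M}\{f(y)+\frac{1}{2\lambda}\|y-x\|_F^2\}$ (a priori a set-valued mapping). *)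

From HB Require Import structures.
From mathcomp Require Import all_boot all_order all_algebra.
From mathcomp Require Import reals.
Set Implicit Arguments. Unset Strict Implicit. Unset Printing Implicit Defensive.
Import Order.TTheory GRing.Theory Num.Theory.
Local Open Scope ring_scope.

Section Defs.
Variable R : realType.
Variables d r : nat.
Notation Mat := 'M[R]_(d, r).

Definition frob (A : Mat) : R := Num.sqrt (\sum_(i < d) \sum_(j < r) A i j ^+ 2).

Definition stiefel (x : Mat) : Prop := x^T *m x = 1%:M.

Definition convex_fun (g : Mat -> R) : Prop :=
  forall (x y : Mat) (t : R), 0 <= t -> t <= 1 ->
    g ((1 - t) *: x + t *: y) <= (1 - t) * g x + t * g y.

Definition weakly_convex (rho : R) (f : Mat -> R) : Prop :=
  convex_fun (fun x => f x + rho / 2 * frob x ^+ 2).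

Definition convex_set (U : Mat -> Prop) : Prop :=
  forall (x y : Mat) (t : R), U x -> U y -> 0 <= t -> t <= 1 ->
    U ((1 - t) *: x + t *: y).

Definition open_set (U : Mat -> Prop) : Prop :=
  forall x, U x -> exists2 e : R, 0 < e & forall y, frob (y - x) < e -> U y.

Definition bounded_set (U : Mat -> Prop) : Prop :=
  exists B : R, forall x, U x -> frob x <= B.

Definition lipschitz_on (L : R) (U : Mat -> Prop) (f : Mat -> R) : Prop :=
  forall x y, U x -> U y -> `|f x - f y| <= L * frob (x - y).

Definition prox_set (lam : R) (f : Mat -> R) (x p : Mat) : Prop :=
  stiefel p /\
  forall y, stiefel y ->
    f p + (2 * lam)^-1 * frob (p - x) ^+ 2 <= f y + (2 * lam)^-1 * frob (y - x) ^+ 2.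

End Defs.

(* The heart of the proof is a one-sided estimate (prox_one_sided): if p is a
   proximal point of x and q is any point of St(d,r), then
     f p - f q <= (rho + 3L)/2 ||p - q||^2 - ||p - q||^2/(2 lam) - <q - p, x>/lam.
   It is obtained by testing the minimality of p against the points Y(t) of a
   curve on St(d,r) leaving p towards q, built with the Cayley transform of a
   skew-symmetric matrix W (stiefel_dir): Y(t) = p + t (q - p) + t p J + O(t^2)
   with ||p J|| <= ||p - q||^2/2, and then letting t -> 0.  Weak convexity is
   used along the chord [p, q], the Lipschitz bound between chord and curve,
   and the proximity ||p - x|| <= 2 lam L to control <p J, x>.  Adding the
   estimates at (x, p) and (y, q) and applying Cauchy-Schwarz gives the
   Lipschitz bound, hence uniqueness; existence follows from compactness of
   St(d,r) and continuity of the proximal objective. *)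

From HB Require Import structures.
From mathcomp Require Import all_boot all_order all_algebra.
From mathcomp Require Import boolp classical_sets reals topology normedtype derive.
From mathcomp Require Import lra ring.
Import Order.TTheory GRing.Theory Num.Theory numFieldNormedType.Exports.
Local Open Scope ring_scope.
Set Implicit Arguments. Unset Strict Implicit. Unset Printing Implicit Defensive.

Section FrobeniusInnerProduct.
Variable R : realType.
Implicit Types (m n k : nat).

Definition ip m n (A B : 'M[R]_(m, n)) : R := \tr (A^T *m B).

Lemma ipE m n (A B : 'M[R]_(m, n)) : ip A B = \sum_i \sum_j A i j * B i j.
Proof.
rewrite /ip /mxtrace exchange_big /=; apply: eq_bigr => j _.
by rewrite mxE; apply: eq_bigr => i _; rewrite mxE.
Qed.

Lemma ipC m n (A B : 'M[R]_(m, n)) : ip A B = ip B A.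
Proof. by rewrite /ip -mxtrace_tr trmx_mul trmxK. Qed.

Lemma ipDl m n (A B C : 'M[R]_(m, n)) : ip (A + B) C = ip A C + ip B C.
Proof. by rewrite /ip linearD /= mulmxDl mxtraceD. Qed.

Lemma ipDr m n (A B C : 'M[R]_(m, n)) : ip C (A + B) = ip C A + ip C B.
Proof. by rewrite /ip mulmxDr mxtraceD. Qed.

Lemma ipZl m n a (A C : 'M[R]_(m, n)) : ip (a *: A) C = a * ip A C.
Proof. by rewrite /ip linearZ /= -scalemxAl mxtraceZ. Qed.

Lemma ipZr m n a (A C : 'M[R]_(m, n)) : ip C (a *: A) = a * ip C A.
Proof. by rewrite /ip -scalemxAr mxtraceZ. Qed.

Lemma ipNl m n (A C : 'M[R]_(m, n)) : ip (- A) C = - ip A C.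
Proof. by rewrite -scaleN1r ipZl mulN1r. Qed.

Lemma ipNr m n (A C : 'M[R]_(m, n)) : ip C (- A) = - ip C A.
Proof. by rewrite -scaleN1r ipZr mulN1r. Qed.

Lemma ipBl m n (A B C : 'M[R]_(m, n)) : ip (A - B) C = ip A C - ip B C.
Proof. by rewrite ipDl ipNl. Qed.

Lemma ipBr m n (A B C : 'M[R]_(m, n)) : ip C (A - B) = ip C A - ip C B.
Proof. by rewrite ipDr ipNr. Qed.

Lemma ip0l m n (C : 'M[R]_(m, n)) : ip 0 C = 0.
Proof. by rewrite /ip trmx0 mul0mx mxtrace0. Qed.

Lemma ip0r m n (C : 'M[R]_(m, n)) : ip C 0 = 0.
Proof. by rewrite ipC ip0l. Qed.

Lemma ip_mulr m n k (A : 'M[R]_(m, n)) (B : 'M[R]_(m, k)) C :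
  ip A (B *m C) = ip (B^T *m A) C.
Proof. by rewrite /ip trmx_mul trmxK mulmxA. Qed.

Lemma ip_mulr_trC m n k (A : 'M[R]_(m, n)) (B : 'M[R]_(m, k)) C :
  ip A (B *m C) = ip (A *m C^T) B.
Proof. by rewrite /ip trmx_mul trmxK mulmxA mxtrace_mulC mulmxA. Qed.

Lemma ip_ge0 m n (A : 'M[R]_(m, n)) : 0 <= ip A A.
Proof.
rewrite ipE; apply: sumr_ge0 => i _; apply: sumr_ge0 => j _.
by rewrite -expr2 sqr_ge0.
Qed.

Lemma ip_eq0 m n (A : 'M[R]_(m, n)) : ip A A = 0 -> A = 0.
Proof.
have sq_ge0 i j : 0 <= A i j * A i j by rewrite -expr2 sqr_ge0.
rewrite ipE => /eqP; rewrite psumr_eq0 => [/allP rows0|]; last first.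
  by move=> i _; apply: sumr_ge0.
apply/matrixP => i j; rewrite mxE.
move: (rows0 i (mem_index_enum _)); rewrite psumr_eq0 // => /allP.
by move=> /(_ j (mem_index_enum _)); rewrite mulf_eq0 orbb => /eqP.
Qed.

Lemma frob_sq m n (A : 'M[R]_(m, n)) : frob A ^+ 2 = ip A A.
Proof.
rewrite /frob sqr_sqrtr ?ipE; last first.
  by apply: sumr_ge0 => i _; apply: sumr_ge0 => j _; exact: sqr_ge0.
by apply: eq_bigr => i _; apply: eq_bigr => j _; rewrite expr2.
Qed.

Lemma frob_ge0 m n (A : 'M[R]_(m, n)) : 0 <= frob A.
Proof. exact: sqrtr_ge0. Qed.

Lemma frobE m n (A : 'M[R]_(m, n)) : frob A = Num.sqrt (ip A A).
Proof. by rewrite -frob_sq sqrtr_sqr ger0_norm ?frob_ge0. Qed.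

Lemma frob_eq0 m n (A : 'M[R]_(m, n)) : frob A = 0 -> A = 0.
Proof. by move=> A0; apply: ip_eq0; rewrite -frob_sq A0 expr0n. Qed.

Lemma frob0 m n : frob (0 : 'M[R]_(m, n)) = 0.
Proof. by rewrite frobE ip0l sqrtr0. Qed.

Lemma frobN m n (A : 'M[R]_(m, n)) : frob (- A) = frob A.
Proof. by rewrite !frobE ipNl ipNr opprK. Qed.

Lemma frobB m n (A B : 'M[R]_(m, n)) : frob (A - B) = frob (B - A).
Proof. by rewrite -frobN opprB. Qed.

Lemma frobZ m n a (A : 'M[R]_(m, n)) : frob (a *: A) = `|a| * frob A.
Proof. by rewrite !frobE ipZl ipZr mulrA -expr2 sqrtrM ?sqr_ge0 // sqrtr_sqr. Qed.

Lemma frob_le m n k l (A : 'M[R]_(m, n)) (B : 'M[R]_(k, l)) :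
  ip A A <= ip B B -> frob A <= frob B.
Proof. by move=> le_AB; rewrite !frobE ler_wsqrtr. Qed.

(* Cauchy-Schwarz, from the positivity of <bA - aB, bA - aB> with a, b the norms. *)
Lemma ip_CS m n (A B : 'M[R]_(m, n)) : ip A B <= frob A * frob B.
Proof.
have [A0|Anz] := eqVneq (frob A) 0; first by rewrite (frob_eq0 A0) ip0l frob0 mul0r.
have [B0|Bnz] := eqVneq (frob B) 0; first by rewrite (frob_eq0 B0) ip0r frob0 mulr0.
have pos := ip_ge0 (frob B *: A - frob A *: B).
rewrite !ipBl !ipBr !ipZl !ipZr (ipC B A) -!frob_sq in pos.
have ab_gt0 : 0 < frob A * frob B by rewrite mulr_gt0 // lt0r ?Anz ?Bnz frob_ge0.
by rewrite -(ler_pM2l ab_gt0); nra.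
Qed.

Lemma ip_norm_le m n (A B : 'M[R]_(m, n)) : `|ip A B| <= frob A * frob B.
Proof. by rewrite ler_norml ip_CS andbT lerNl -ipNl -(frobN A) ip_CS. Qed.

Lemma frob_triangle m n (A B : 'M[R]_(m, n)) : frob (A + B) <= frob A + frob B.
Proof.
have a0 := frob_ge0 A; have b0 := frob_ge0 B.
rewrite -[leRHS]ger0_norm ?addr_ge0 // -sqrtr_sqr frobE ler_wsqrtr //.
by rewrite ipDl !ipDr (ipC B A) -!frob_sq; have := ip_CS A B; nra.
Qed.

(* The Gram matrix is controlled by the norm: ||B^T B|| <= ||B||^2; entrywise
   this is Cauchy-Schwarz on the columns of B. *)
Lemma frob_gram m n (B : 'M[R]_(m, n)) : frob (B^T *m B) <= frob B ^+ 2.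
Proof.
suff h : frob (B^T *m B) ^+ 2 <= (frob B ^+ 2) ^+ 2.
  by have := frob_ge0 (B^T *m B); have := frob_ge0 B; nra.
have col_sum : \sum_i ip (col i B) (col i B) = ip B B.
  rewrite [in RHS]ipE [in RHS]exchange_big /=; apply: eq_bigr => i _.
  by rewrite ipE; apply: eq_bigr => l _; rewrite big_ord1 !mxE.
have gramE i j : (B^T *m B) i j = ip (col i B) (col j B).
  by rewrite mxE ipE; apply: eq_bigr => l _; rewrite big_ord1 !mxE.
rewrite frob_sq [frob B ^+ 2]frob_sq ipE expr2 -col_sum mulr_suml.
apply: ler_sum => i _; rewrite mulr_sumr; apply: ler_sum => j _.
rewrite gramE -expr2 -!frob_sq -exprMn.
have := ip_norm_le (col i B) (col j B); rewrite ler_norml => /andP[lo hi].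
by have := frob_ge0 (col i B); have := frob_ge0 (col j B); nra.
Qed.

End FrobeniusInnerProduct.

Section StiefelFacts.
Variable R : realType.
Implicit Types (d r k : nat).

Lemma ip_stiefel d r (p : 'M[R]_(d, r)) : stiefel p -> ip p p = r%:R.
Proof. by rewrite /stiefel /ip => ->; rewrite mxtrace1. Qed.

(* Points of St(d,r) all have the same norm, so the squared distance to a fixed
   x is affine in <., x>: ||Y - x||^2 - ||p - x||^2 = -2 <Y - p, x>. *)
Lemma stiefel_dist_sq d r (p Y x : 'M[R]_(d, r)) : stiefel p -> stiefel Y ->
  frob (Y - x) ^+ 2 = frob (p - x) ^+ 2 - 2 * ip (Y - p) x.
Proof.
move=> sp sY; rewrite !frob_sq !ipBl !ipBr (ipC x Y) (ipC x p).
by rewrite (ip_stiefel sY) (ip_stiefel sp); ring.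
Qed.

Lemma frob_stiefel_mul d r k (p : 'M[R]_(d, r)) (A : 'M[R]_(r, k)) :
  stiefel p -> frob (p *m A) = frob A.
Proof. by move=> sp; rewrite !frobE ip_mulr mulmxA sp mul1mx. Qed.

Lemma frob_stiefel_trmul d r k (p : 'M[R]_(d, r)) (A : 'M[R]_(d, k)) :
  stiefel p -> frob (p^T *m A) <= frob A.
Proof.
move=> sp; apply: frob_le.
have := ip_ge0 (A - p *m (p^T *m A)).
rewrite !ipBl !ipBr (ipC (p *m _) A) ip_mulr (ip_mulr (p *m _)) mulmxA sp mul1mx.
lra.
Qed.

(* Columns of a point of St(d,r) are unit vectors, so its entries lie in [-1, 1]. *)
Lemma stiefel_entry_le1 d r (x : 'M[R]_(d, r)) i j : stiefel x -> `|x i j| <= 1.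
Proof.
move=> sx; have := congr1 (fun M : 'M[R]_r => M j j) sx; rewrite !mxE eqxx /= => col1.
have : x i j * x i j <= \sum_(l < d) x^T j l * x l j.
  rewrite (bigD1 i) //= mxE lerDl; apply: sumr_ge0 => l _.
  by rewrite mxE -expr2 sqr_ge0.
by rewrite col1 => sq_le1; rewrite ler_norml; apply/andP; split; nra.
Qed.

End StiefelFacts.

(* The Cayley transform Y = (I - A)^-1 (I + A) p of a skew-symmetric A maps
   St(d,r) into itself; it is the retraction used to move along St(d,r). *)
Section Cayley.
Variable R : realType.

Lemma skew_unitmx n (B : 'M[R]_n) : B^T = - B -> (1%:M - B) \in unitmx.
Proof.
move=> skB; rewrite unitmxE unitfE; apply/negP => /det0P [v vn0 vB]; move: vn0.
have fix_v : v = v *m B.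
  by apply/eqP; rewrite -subr_eq0 -[X in X - _]mulmx1 -mulmxBr vB.
have : ip v v = - ip v v by rewrite {2}fix_v ip_mulr_trC skB mulmxN ipNl -fix_v.
move=> vv; have vv0 : ip v v = 0 by lra.
by rewrite (ip_eq0 vv0) eqxx.
Qed.

Variables (n : nat) (A : 'M[R]_n).
Hypothesis skewA : A^T = - A.

Let unitB : (1%:M - A) \in unitmx.
Proof. exact: skew_unitmx. Qed.

Let unitD : (1%:M + A) \in unitmx.
Proof.
have skN : (- A)^T = - - A by rewrite linearN /= skewA.
by have := skew_unitmx skN; rewrite opprK.
Qed.

(* ||(I - A)^-1 M|| <= ||M||, since ||(I - A) N||^2 = ||N||^2 + ||A N||^2. *)
Lemma cayley_contract k (M : 'M[R]_(n, k)) : frob (invmx (1%:M - A) *m M) <= frob M.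
Proof.
set N := invmx (1%:M - A) *m M.
have eM : M = (1%:M - A) *m N by rewrite /N mulmxA mulmxV // mul1mx.
apply: frob_le; rewrite [in leRHS]eM mulmxBl mul1mx.
have ip_skew0 : ip N (A *m N) = 0.
  have : ip N (A *m N) = - ip N (A *m N) by rewrite {1}ip_mulr skewA mulNmx ipNl ipC.
  lra.
by rewrite !ipBl !ipBr ip_skew0 (ipC (A *m N) N) ip_skew0; have := ip_ge0 (A *m N); lra.
Qed.

Definition cayley k (p : 'M[R]_(n, k)) := invmx (1%:M - A) *m ((1%:M + A) *m p).

Lemma cayley_stiefel k (p : 'M[R]_(n, k)) :
  p^T *m p = 1%:M -> (cayley p)^T *m cayley p = 1%:M.
Proof.
move=> pp1; set C := invmx (1%:M - A) *m (1%:M + A).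
have comm : (1%:M + A) *m (1%:M - A) = (1%:M - A) *m (1%:M + A).
  rewrite !(mulmxDl, mulmxDr, mulmxBl, mulmxBr, mul1mx, mulmx1, mulmxN, mulNmx).
  by apply/matrixP => i j; rewrite !mxE; ring.
have CE : C = (1%:M + A) *m invmx (1%:M - A).
  symmetry; transitivity (invmx (1%:M - A) *m ((1%:M - A) *m (1%:M + A)) *m invmx (1%:M - A)).
    by rewrite mulmxA mulVmx // mul1mx.
  by rewrite -comm mulmxA -(mulmxA _ (1%:M - A)) mulmxV // mulmx1.
have trD : (1%:M + A)^T = 1%:M - A by rewrite linearD /= skewA trmx1.
have trB : (1%:M - A)^T = 1%:M + A by rewrite linearB /= skewA trmx1 opprK.
have CT : C^T = (1%:M - A) *m invmx (1%:M + A) by rewrite trmx_mul trmx_inv trD trB.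
have -> : cayley p = C *m p by rewrite /cayley /C mulmxA.
rewrite trmx_mul -mulmxA (mulmxA C^T) CT CE.
rewrite -(mulmxA (1%:M - A)) (mulmxA (invmx _)) mulVmx // mul1mx mulmxV // mul1mx.
exact: pp1.
Qed.

Lemma cayley_expand k (p : 'M[R]_(n, k)) :
  cayley p - (p + (A *m p) *+ 2) = invmx (1%:M - A) *m ((A *m (A *m p)) *+ 2).
Proof.
set X := cayley p - _.
have -> : X = invmx (1%:M - A) *m ((1%:M - A) *m X) by rewrite mulmxA mulVmx // mul1mx.
congr (_ *m _).
rewrite /X /cayley mulmxBr (mulmxA (1%:M - A) (invmx _)) mulmxV // mul1mx.
rewrite !mulr2n !(mulmxDl, mulmxDr, mulmxBl, mulmxBr, mul1mx, mulmx1, mulNmx, mulmxN).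
by apply/matrixP => i j; rewrite !mxE; ring.
Qed.

End Cayley.

Section StiefelCurve.
Variable R : realType.
Variables d r : nat.
Implicit Types (p q x D : 'M[R]_(d, r)) (t e : R).

(* J = D^T D / 2; for D = p - q, p J is the quadratic correction of the curve below. *)
Definition half_gram D : 'M[R]_r := 2^-1 *: (D^T *m D).

(* A skew-symmetric W with W p = (q - p) + p J, where J = half_gram (p - q):
   the infinitesimal motion W p points from p to q up to a term quadratic in
   the distance ||p - q||. *)
Definition stiefel_dir p q : 'M[R]_d :=
  q *m p^T - p *m q^T + p *m (2^-1 *: (q^T *m p - p^T *m q)) *m p^T.

Lemma stiefel_dir_skew p q : (stiefel_dir p q)^T = - stiefel_dir p q.
Proof.
rewrite /stiefel_dir; set K := 2^-1 *: _.
have skK : K^T = - K by rewrite linearZ /= linearB /= !trmx_mul !trmxK -scalerN opprB.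
rewrite !linearD /= !linearN /= !trmx_mul !trmxK skK.
by rewrite mulNmx mulmxN mulmxA; apply/matrixP => i j; rewrite !mxE; ring.
Qed.

Lemma stiefel_dir_mul p q : stiefel p -> stiefel q ->
  stiefel_dir p q *m p = q - p + p *m half_gram (p - q).
Proof.
move=> sp sq.
have gram_pq : (p - q)^T *m (p - q) = 1%:M - p^T *m q - q^T *m p + 1%:M.
  have -> : (p - q)^T = p^T - q^T by apply/matrixP => i j; rewrite !mxE.
  rewrite mulmxBl !mulmxBr sp sq.
  by apply/matrixP => i j; rewrite !mxE; ring.
rewrite /stiefel_dir /half_gram gram_pq.
rewrite !(mulmxDl, mulNmx) -!mulmxA sp !mulmx1 -!scalemxAr !(mulmxDr, mulmxN) !mulmx1.
by apply/matrixP => i j; rewrite !mxE; field.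
Qed.

Lemma frob_half_gram D : frob (half_gram D) <= frob D ^+ 2 / 2.
Proof.
rewrite /half_gram frobZ ger0_norm ?invr_ge0 // mulrC.
by apply: ler_wpM2r; [rewrite invr_ge0 | exact: frob_gram].
Qed.

Lemma ip_half_gram_ge p x D e : stiefel p -> frob (p - x) <= e ->
  frob D ^+ 2 / 2 - e * (frob D ^+ 2 / 2) <= ip (p *m half_gram D) x.
Proof.
move=> sp px_le; rewrite ipC ip_mulr.
have -> : p^T *m x = 1%:M - p^T *m (p - x) by rewrite mulmxBr sp opprB addrC subrK.
have ip1J : ip 1%:M (half_gram D) = frob D ^+ 2 / 2.
  by rewrite ipZr ip_mulr trmxK mulmx1 -frob_sq mulrC.
rewrite ipBl ip1J lerD2l lerN2.
apply: le_trans (ip_CS _ _) _; apply: ler_pM; [exact: frob_ge0 | exact: frob_ge0 | |].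
- exact: le_trans (frob_stiefel_trmul _ sp) px_le.
- exact: frob_half_gram.
Qed.

(* The Cayley curve t |-> Y(t) through p with velocity W p. *)
Definition stiefel_curve p q t := cayley ((t / 2) *: stiefel_dir p q) p.

Definition curve_const p q := frob (stiefel_dir p q *m (stiefel_dir p q *m p)) / 2.

Let skew_step p q t : ((t / 2) *: stiefel_dir p q)^T = - ((t / 2) *: stiefel_dir p q).
Proof. by rewrite linearZ /= stiefel_dir_skew scalerN. Qed.

Lemma stiefel_curve_stiefel p q t : stiefel p -> stiefel (stiefel_curve p q t).
Proof. exact: cayley_stiefel. Qed.

Lemma stiefel_curve_expand p q t : stiefel p -> stiefel q ->
  frob (stiefel_curve p q t - (p + t *: (q - p) + t *: (p *m half_gram (p - q))))
    <= t ^+ 2 * curve_const p q.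
Proof.
move=> sp sq; set W := stiefel_dir p q.
have first_order : ((t / 2) *: W *m p) *+ 2 = t *: (q - p) + t *: (p *m half_gram (p - q)).
  rewrite -scalemxAl stiefel_dir_mul // scalerMnl -scalerDr -addrA.
  by congr (_ *: _); rewrite mulr2n; field.
have second_order : ((t / 2) *: W *m ((t / 2) *: W *m p)) *+ 2
                    = (t ^+ 2 / 2) *: (W *m (W *m p)).
  rewrite -!scalemxAl -!scalemxAr !scalerA scalerMnl; congr (_ *: _).
  by rewrite mulr2n; field.
rewrite -addrA -first_order cayley_expand ?skew_step //.
apply: le_trans (cayley_contract (skew_step p q t) _) _.
rewrite second_order frobZ ger0_norm ?divr_ge0 ?sqr_ge0 //.
by rewrite /curve_const mulrAC mulrA.
Qed.

End StiefelCurve.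

Lemma le_of_vanishing_slack (R : realFieldType) (X B C : R) : 0 <= C ->
  (forall t, 0 < t -> t <= 1 -> X <= B + t * C) -> X <= B.
Proof.
move=> C_ge0 slack; apply/ler_addgt0Pr => e e_gt0.
have C1_gt0 : 0 < C + 1 by rewrite ltr_wpDl.
set t := Num.min 1 (e / (C + 1)).
have t_gt0 : 0 < t by rewrite lt_min ltr01 divr_gt0.
have t_le1 : t <= 1 by rewrite ge_min lexx.
have tC_le : t * C <= e.
  apply: le_trans (_ : e / (C + 1) * C <= e).
    by rewrite ler_wpM2r // ge_min lexx orbT.
  by rewrite mulrAC ler_pdivrMr //; nra.
by apply: le_trans (slack t t_gt0 t_le1) _; lra.
Qed.

Section ProximalMapping.
Variable R : realType.
Variables (d r : nat) (f : 'M[R]_(d, r) -> R) (rho L lam : R) (U : 'M[R]_(d, r) -> Prop).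
Hypotheses (rho_ge0 : 0 <= rho) (L_ge0 : 0 <= L) (lam_gt0 : 0 < lam).
Hypotheses (f_wc : weakly_convex rho f) (U_convex : convex_set U).
Hypotheses (U_stiefel : forall x, stiefel x -> U x) (f_lip : lipschitz_on L U f).
Implicit Types (p q x y Y : 'M[R]_(d, r)) (t : R).

(* Minimality of p tested against a competitor Y on St(d,r); as all points of
   St(d,r) have the same norm, the test is affine in Y. *)
Lemma prox_le_competitor x p Y : prox_set lam f x p -> stiefel Y ->
  f p <= f Y - ip (Y - p) x / lam.
Proof.
move=> [sp p_min] sY; have := p_min Y sY; rewrite (stiefel_dist_sq x sp sY).
have -> : (2 * lam)^-1 * (frob (p - x) ^+ 2 - 2 * ip (Y - p) x)
        = (2 * lam)^-1 * frob (p - x) ^+ 2 - ip (Y - p) x / lam.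
  by field; rewrite gt_eqF.
lra.
Qed.

Lemma prox_near x p : stiefel x -> prox_set lam f x p -> frob (p - x) <= 2 * lam * L.
Proof.
move=> sx [sp p_min]; have := p_min x sx.
rewrite subrr frob0 expr0n /= mulr0 addr0 => min_x.
have lip_px : f x - f p <= L * frob (p - x).
  by apply: le_trans (f_lip (U_stiefel sp) (U_stiefel sx)); rewrite distrC ler_norm.
have F_ge0 := frob_ge0 (p - x).
have two_lam_gt0 : 0 < 2 * lam by rewrite mulr_gt0.
have sq_le : frob (p - x) ^+ 2 <= 2 * lam * L * frob (p - x).
  have kF : (2 * lam)^-1 * frob (p - x) ^+ 2 <= L * frob (p - x) by lra.
  have := ler_wpM2l (ltW two_lam_gt0) kF.
  by rewrite mulrA mulfV ?gt_eqF // mul1r mulrA.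
have M_ge0 : 0 <= 2 * lam * L by rewrite !mulr_ge0 // ltW.
nra.
Qed.

(* rho-weak convexity along a chord of St(d,r), where ||.||^2 is known. *)
Lemma weakly_convex_stiefel p q t : stiefel p -> stiefel q -> 0 <= t -> t <= 1 ->
  f ((1 - t) *: p + t *: q)
    <= (1 - t) * f p + t * f q + rho / 2 * (t * (1 - t) * frob (p - q) ^+ 2).
Proof.
move=> sp sq t_ge0 t_le1; have := f_wc p q t_ge0 t_le1.
have chord : frob ((1 - t) *: p + t *: q) ^+ 2 = r%:R - t * (1 - t) * frob (p - q) ^+ 2.
  rewrite !frob_sq !ipDl !ipDr !ipZl !ipZr ?ipNl ?ipNr (ipC q p) !ip_stiefel //.
  ring.
rewrite /= chord !frob_sq (ip_stiefel sp) (ip_stiefel sq).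
lra.
Qed.

(* Value of f along the curve from p towards q: convexity on the chord plus the
   Lipschitz bound on the distance between curve and chord. *)
Lemma f_stiefel_curve p q t : stiefel p -> stiefel q -> 0 < t -> t <= 1 ->
  f (stiefel_curve p q t)
    <= (1 - t) * f p + t * f q + rho / 2 * (t * (1 - t) * frob (p - q) ^+ 2)
       + L * (t * (frob (p - q) ^+ 2 / 2) + t ^+ 2 * curve_const p q).
Proof.
move=> sp sq t_gt0 t_le1.
set Y := stiefel_curve p q t; set J := half_gram (p - q).
set z := (1 - t) *: p + t *: q.
have sY : stiefel Y by exact: stiefel_curve_stiefel.
have Uz : U z := U_convex (U_stiefel sp) (U_stiefel sq) (ltW t_gt0) t_le1.
have Yz : Y - z = t *: (p *m J) + (Y - (p + t *: (q - p) + t *: (p *m J))).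
  by apply/matrixP => i j; rewrite /z !mxE; ring.
have dist_Yz : frob (Y - z) <= t * (frob (p - q) ^+ 2 / 2) + t ^+ 2 * curve_const p q.
  rewrite Yz; apply: le_trans (frob_triangle _ _) _; apply: lerD.
  - rewrite frobZ (ger0_norm (ltW t_gt0)) frob_stiefel_mul //.
    by apply: ler_wpM2l; [exact: ltW | exact: frob_half_gram].
  - exact: stiefel_curve_expand.
have fYz : f Y <= f z + L * frob (Y - z).
  by rewrite -lerBlDl; apply: le_trans (f_lip (U_stiefel sY) Uz); rewrite ler_norm.
have := weakly_convex_stiefel sp sq (ltW t_gt0) t_le1; rewrite -/z.
have := ler_wpM2l L_ge0 dist_Yz.
lra.
Qed.

(* The one-sided estimate at a proximal point p of x, compared with any q on
   St(d,r): test p against Y(t) on the curve towards q and let t -> 0. *)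
Lemma prox_one_sided x p q : stiefel x -> stiefel q -> prox_set lam f x p ->
  f p - f q <= (rho + 3 * L) / 2 * frob (p - q) ^+ 2
               - frob (p - q) ^+ 2 / (2 * lam) - ip (q - p) x / lam.
Proof.
move=> sx sq prox_p; have sp := prox_p.1.
set D2 := frob (p - q) ^+ 2; set c := curve_const p q; set fx := frob x.
set il := lam^-1.
have il_ge0 : 0 <= il by rewrite invr_ge0 ltW.
have c_ge0 : 0 <= c by rewrite divr_ge0 ?frob_ge0.
have fx_ge0 : 0 <= fx by exact: frob_ge0.
have slack_ge0 : 0 <= c * (L + fx * il) by rewrite mulr_ge0 // addr_ge0 // mulr_ge0.
apply: (le_of_vanishing_slack slack_ge0) => t t_gt0 t_le1.
set Y := stiefel_curve p q t; set J := half_gram (p - q).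
set eps := Y - (p + t *: (q - p) + t *: (p *m J)).
have eps_le : frob eps <= t ^+ 2 * c by exact: stiefel_curve_expand.
have ip_step : ip (Y - p) x = t * ip (q - p) x + t * ip (p *m J) x + ip eps x.
  have -> : Y - p = t *: (q - p) + t *: (p *m J) + eps.
    by apply/matrixP => i j; rewrite /eps !mxE; ring.
  by rewrite [LHS]ipDl [in LHS]ipDl !ipZl.
have compete := prox_le_competitor prox_p (stiefel_curve_stiefel q t sp).
have curve := f_stiefel_curve sp sq t_gt0 t_le1.
have ipJ : t * (il * (D2 / 2)) - t * L * D2 <= t * (il * ip (p *m J) x).
  have := ip_half_gram_ge (p - q) sp (prox_near sx prox_p).
  move/(ler_wpM2l (mulr_ge0 (ltW t_gt0) il_ge0)).
  have -> : t * il * (D2 / 2 - 2 * lam * L * (D2 / 2)) = t * (il * (D2 / 2)) - t * L * D2.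
    by rewrite /il; field; rewrite gt_eqF.
  by rewrite -[t * il * _]mulrA.
have ip_eps : - (il * ip eps x) <= il * (t ^+ 2 * c * fx).
  rewrite -mulrN; apply: ler_wpM2l => //.
  apply: le_trans (ler_norm _) _; rewrite normrN.
  by apply: le_trans (ip_norm_le _ _) _; exact: ler_wpM2r.
have rho_t2 : 0 <= rho * t ^+ 2 * D2.
  by apply: mulr_ge0; [apply: mulr_ge0 => //; exact: sqr_ge0 | exact: sqr_ge0].
rewrite ip_step -/il in compete; rewrite -/D2 -/c in curve.
suff : t * (f p - f q) <= t * ((rho + 3 * L) / 2 * D2 - D2 / (2 * lam)
                                - ip (q - p) x / lam + t * (c * (L + fx * il))).
  by rewrite ler_pM2l.
rewrite invfM -/il.
lra.
Qed.

(* Adding the one-sided estimates at (x, p) and (y, q) gives the contraction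
   bound, by Cauchy-Schwarz on <p - q, x - y>. *)
Lemma prox_lipschitz x y p q : lam * (rho + 3 * L) < 1 ->
  stiefel x -> stiefel y -> prox_set lam f x p -> prox_set lam f y q ->
  frob (p - q) <= (1 - lam * (rho + 3 * L))^-1 * frob (x - y).
Proof.
move=> lam_small sx sy prox_p prox_q.
have one_p := prox_one_sided sx prox_q.1 prox_p.
have one_q := prox_one_sided sy prox_p.1 prox_q.
rewrite frobB in one_q.
set F := frob (p - q) in one_p one_q *; set G := frob (x - y).
set kap := 1 - lam * (rho + 3 * L).
have kap_gt0 : 0 < kap by rewrite subr_gt0.
have F_ge0 : 0 <= F by exact: frob_ge0.
have cs : ip (p - q) (x - y) <= F * G by exact: ip_CS.
have ip_sum : ip (q - p) x + ip (p - q) y = - ip (p - q) (x - y).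
  by rewrite !ipBl !ipBr; ring.
have key : kap * F ^+ 2 <= F * G.
  rewrite invfM in one_p one_q.
  have sum_ge0 : 0 <= lam * ((rho + 3 * L) * F ^+ 2 - F ^+ 2 / lam
                              - (ip (q - p) x + ip (p - q) y) / lam).
    by apply: mulr_ge0; [exact: ltW | lra].
  have expand : lam * ((rho + 3 * L) * F ^+ 2 - F ^+ 2 / lam - - ip (p - q) (x - y) / lam)
               = ip (p - q) (x - y) - kap * F ^+ 2.
    by rewrite /kap; field; rewrite gt_eqF.
  by move: sum_ge0; rewrite ip_sum expand subr_ge0 => /le_trans; apply.
rewrite -(ler_pM2l kap_gt0) mulrA mulfV ?gt_eqF // mul1r.
have [F0|F_neq0] := eqVneq F 0; first by rewrite F0 mulr0; exact: frob_ge0.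
have F_gt0 : 0 < F by rewrite lt0r F_neq0.
by rewrite -(ler_pM2l F_gt0); move: key; rewrite expr2; nra.
Qed.

End ProximalMapping.

(* Compactness of closed bounded sets is available for
   row vectors, so St(d,r) is handled through the vectorization vec_mx. *)
Section ProxExistence.
Variable R : realType.
Local Open Scope classical_set_scope.

Lemma lipschitz_within_continuous (V : normedModType R) (S : set V) (h : V -> R) (K : R) :
  0 <= K -> (forall a b, S a -> S b -> `|h a - h b| <= K * `|a - b|) ->
  {within S, continuous h}.
Proof.
move=> K_ge0 h_lip; apply/subspace_continuousP => v Sv; apply/cvgrPdist_lt => e e_gt0.
have K1_gt0 : 0 < K + 1 by rewrite ltr_wpDl.
have eK_gt0 : 0 < e / (K + 1) by rewrite divr_gt0.
have near_v : \forall t \near v, `|v - t| < e / (K + 1).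
  by apply/nbhs_normP; exists (e / (K + 1)).
rewrite near_withinE; move: near_v; apply: filterS => t vt St /=.
apply: le_lt_trans (h_lip _ _ Sv St) _.
have : K * `|v - t| <= K * (e / (K + 1)) by apply: ler_wpM2l => //; exact: ltW.
have : K * (e / (K + 1)) < e by rewrite mulrA ltr_pdivrMr //; nra.
lra.
Qed.

Lemma vec_mx_entry_le n m (u : 'rV[R]_(n * m)) i j : `|vec_mx u i j| <= `|u|.
Proof.
rewrite mxE [leRHS]/Num.norm /= mx_normrE.
by apply/bigmax_geP; right => /=; exists (ord0, mxvec_index i j).
Qed.

Lemma frob_vec_mx n m (u : 'rV[R]_(n * m)) : frob (vec_mx u) <= (n * m)%:R * `|u|.
Proof.
set N := (n * m)%:R; set M := `|u|.
have N_ge0 : 0 <= N by exact: ler0n.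
have M_ge0 : 0 <= M by exact: normr_ge0.
rewrite frobE -[leRHS]ger0_norm ?mulr_ge0 // -sqrtr_sqr ler_wsqrtr //.
apply: le_trans (_ : N * M ^+ 2 <= _).
  rewrite ipE; apply: le_trans (_ : \sum_(i < n) \sum_(j < m) M ^+ 2 <= _).
    apply: ler_sum => i _; apply: ler_sum => j _.
    by have := vec_mx_entry_le u i j; rewrite ler_norml -/M => /andP[? ?]; nra.
  by rewrite !sumr_const !card_ord -mulrnA mulr_natl mulnC.
have N_le_sq : N <= N ^+ 2.
  rewrite /N; case: (n * m)%N => [|k]; first by rewrite expr0n lexx.
  by rewrite expr2 ler_peMl // ler1n.
by rewrite exprMn ler_wpM2r ?sqr_ge0.
Qed.

Definition stiefel_vec d r := [set v : 'rV[R]_(d * r) | stiefel (vec_mx v)].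
Arguments stiefel_vec : clear implicits.

(* Closed: each entry of x^T x is a continuous function of the coordinates. *)
Lemma stiefel_vec_closed d r : closed (stiefel_vec d r).
Proof.
pose gram_entry (ij : 'I_r * 'I_r) (v : 'rV[R]_(d * r)) :=
  \sum_(k < d) v 0 (mxvec_index k ij.1) * v 0 (mxvec_index k ij.2).
have -> : stiefel_vec d r = \bigcap_(ij in [set: 'I_r * 'I_r])
    (gram_entry ij @^-1` [set (1%:M : 'M[R]_r) ij.1 ij.2]).
  apply/seteqP; split => v /=.
    move=> sv [i j] _ /=; rewrite -sv mxE; apply: eq_bigr => k _; by rewrite !mxE.
  move=> gram1; apply/matrixP => i j; rewrite -(gram1 (i, j)) //= mxE.
  by apply: eq_bigr => k _; rewrite !mxE.
apply: closed_bigI => ij _; apply: (proj1 (continuous_closedP _)); last exact: closed_eq.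
apply: (@continuous_big _ _ +%R 0 xpredT add_continuous) => k _ v.
by apply: continuousM; exact: coord_continuous.
Qed.

(* St(d,r) is closed and bounded (its entries lie in [-1, 1]), hence compact. *)
Lemma stiefel_vec_compact d r : compact (stiefel_vec d r).
Proof.
apply: bounded_closed_compact; last exact: stiefel_vec_closed.
exists 1; split=> // M M_gt1 v sv; apply: le_trans (ltW M_gt1).
rewrite [leLHS]/Num.norm /= mx_normrE; apply: bigmax_le => //= -[i k] _.
case/mxvec_indexP: k => a b.
by have := stiefel_entry_le1 a b sv; rewrite mxE (ord1 i).
Qed.

(* The proximal objective is Lipschitz on St(d,r), so it attains its minimum. *)
Lemma prox_exists d r (f : 'M[R]_(d, r) -> R) L U lam x :
  0 <= L -> 0 < lam -> (forall x, stiefel x -> U x) -> lipschitz_on L U f ->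
  stiefel x -> exists p, prox_set lam f x p.
Proof.
move=> L_ge0 lam_gt0 U_stiefel f_lip sx.
set k := (2 * lam)^-1.
have k_ge0 : 0 <= k by rewrite invr_ge0 mulr_ge0 // ltW.
set obj := fun v : 'rV[R]_(d * r) => f (vec_mx v) + k * frob (vec_mx v - x) ^+ 2.
set K := (L + k * (2 * frob x)) * (d * r)%:R.
have K_ge0 : 0 <= K by rewrite mulr_ge0 // addr_ge0 // mulr_ge0 // mulr_ge0 // frob_ge0.
have obj_lip a b : stiefel_vec d r a -> stiefel_vec d r b ->
    `|obj a - obj b| <= K * `|a - b|.
  move=> sa sb; rewrite /obj; set A := vec_mx a; set B := vec_mx b.
  have dist_diff : frob (A - x) ^+ 2 - frob (B - x) ^+ 2 = - (2 * ip (A - B) x).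
    by rewrite (stiefel_dist_sq x sb sa); ring.
  have AB_le : frob (A - B) <= (d * r)%:R * `|a - b|.
    by rewrite /A /B -linearB frob_vec_mx.
  apply: le_trans (_ : `|f A - f B| + k * (2 * (frob (A - B) * frob x)) <= _).
    have -> : f A + k * frob (A - x) ^+ 2 - (f B + k * frob (B - x) ^+ 2)
            = (f A - f B) + k * (frob (A - x) ^+ 2 - frob (B - x) ^+ 2) by ring.
    apply: le_trans (ler_normD _ _) _; apply: lerD => //.
    rewrite normrM ger0_norm // dist_diff normrN normrM ger0_norm //.
    by apply: ler_wpM2l => //; apply: ler_wpM2l => //; exact: ip_norm_le.
  have := f_lip A B (U_stiefel _ sa) (U_stiefel _ sb).
  have : (L + k * (2 * frob x)) * frob (A - B) <= K * `|a - b|.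
    by rewrite /K -mulrA; apply: ler_wpM2l => //; rewrite addr_ge0 // !mulr_ge0 // frob_ge0.
  have := frob_ge0 (A - B); have := frob_ge0 x.
  nra.
have sx_vec : stiefel_vec d r (mxvec x) by rewrite /stiefel_vec /= mxvecK.
have [c sc c_min] := compact_EVT_min (ex_intro _ _ sx_vec) (@stiefel_vec_compact d r)
  (lipschitz_within_continuous K_ge0 obj_lip).
exists (vec_mx c); split; first by rewrite inE in sc.
move=> y sy; have := c_min (mxvec y); rewrite inE /stiefel_vec /= mxvecK => /(_ sy).
by rewrite /obj mxvecK.
Qed.

End ProxExistence.

(* Existence by compactness; uniqueness and the Lipschitz bound both follow from
   prox_lipschitz (with x = y for uniqueness). *)
Theorem lemma4p1 (R : realType) (d r : nat) (f : 'M[R]_(d, r) -> R)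
  (rho L : R) (U : 'M[R]_(d, r) -> Prop) :
  (r <= d)%N -> 0 <= rho -> 0 <= L -> weakly_convex rho f ->
  open_set U -> bounded_set U -> convex_set U ->
  (forall x, stiefel x -> U x) -> lipschitz_on L U f ->
  forall lam : R, 0 < lam -> lam * (rho + 3 * L) < 1 ->
    (forall x, stiefel x -> exists! p, prox_set lam f x p) /\
    (forall x y p q, stiefel x -> stiefel y -> prox_set lam f x p -> prox_set lam f y q ->
       frob (p - q) <= (1 - lam * (rho + 3 * L))^-1 * frob (x - y)).
Proof.
move=> _ rho_ge0 L_ge0 f_wc _ _ U_convex U_stiefel f_lip lam lam_gt0 lam_small.
have prox_lip := prox_lipschitz rho_ge0 L_ge0 lam_gt0 f_wc U_convex U_stiefel f_lip lam_small.
split=> [x sx|]; last exact: prox_lip.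
have [p prox_p] := prox_exists L_ge0 lam_gt0 U_stiefel f_lip sx.
exists p; split=> // p' prox_p'.
have := prox_lip _ _ _ _ sx sx prox_p prox_p'; rewrite subrr frob0 mulr0 => dist_le0.
apply/eqP; rewrite -subr_eq0; apply/eqP; apply: frob_eq0.
by apply/le_anti; rewrite dist_le0 frob_ge0.
Qed.
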